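(* Let $(B,k)$ be an instance of the orthogonal buttons and scissors problem, with $B$ an $n\times m$ matrix, such that every row of $B$ contains at least one button, and such that there is no row block $X=[a,b]$ of $B$ and index $i_0\in X$ with the property that for every column $j$, either $B[X,\{j\}]$ contains no buttons, or both $B[[a,i_0-1],\{j\}]$ and $B[[i_0+1,b],\{j\}]$ contain at least $k$ buttons. If $n>(4k^2+1)(k+1)k(4k+6)^k$, then $(B,k)$ is a no-instance.
   Context: An instance of the orthogonal buttons and scissors problem is a pair $(B,k)$ where $B$ is an $n\times m$ matrix with nonnegative integer entries and $k$ is a nonnegative integer. Cell $(i,j)$ contains a button of color $c$ if $B[i,j]=c>0$, and no button if $B[i,j]=0$. A cut is either a horizontal cut (a sequence of consecutive cells in one row) or a vertical cut (a sequence of consecutive cells in one column). Cuts are applied one after another; a cut is valid at the moment it is applied if, among the buttons still present, its first and last cells contain buttons and all buttons in its cells have the same color. Applying a cut deletes all buttons in its cells. $(B,k)$ is a yes-instance if some sequence of at most $k$ cuts, each valid when applied, removes all buttons of $B$, and a no-instance otherwise. For a set of rows $X$ and set of columns $Y$, $B[X,Y]$ denotes the submatrix with entries $B[x,y]$, $x\in X$, $y\in Y$; $[a,b]$ denotes $\{a,\ldots,b\}$. A row block is a set $X$ of consecutive row indices such that for every column $j$, all buttons in $B[X,\{j\}]$ have the same color. *)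

From mathcomp Require Import all_boot all_algebra.
Set Implicit Arguments. Unset Strict Implicit. Unset Printing Implicit Defensive.

(* A board is an n x m matrix of nat; entry 0 = no button, c > 0 = button of color c.
   Rows/columns are 0-indexed ('I_n, 'I_m). *)

(* A cut: horizontal cut in row i between columns c1 and c2 (endpoints = first/last
   cell), or vertical cut in column j between rows r1 and r2. *)
Inductive cut (n m : nat) : Type :=
| HCut of 'I_n & 'I_m & 'I_m
| VCut of 'I_m & 'I_n & 'I_n.

Definition in_cut n m (c : cut n m) (i : 'I_n) (j : 'I_m) : bool :=
  match c with
  | HCut i0 c1 c2 => (i == i0) && (minn c1 c2 <= j <= maxn c1 c2)
  | VCut j0 r1 r2 => (j == j0) && (minn r1 r2 <= i <= maxn r1 r2)
  end.

Definition first_cell n m (c : cut n m) : 'I_n * 'I_m :=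
  match c with
  | HCut i0 c1 _ => (i0, c1)
  | VCut j0 r1 _ => (r1, j0)
  end.

Definition last_cell n m (c : cut n m) : 'I_n * 'I_m :=
  match c with
  | HCut i0 _ c2 => (i0, c2)
  | VCut j0 _ r2 => (r2, j0)
  end.

(* A state: predicate of cells still containing a button. *)
Definition state n m := 'I_n -> 'I_m -> bool.

Definition valid_cut n m (B : 'M[nat]_(n, m)) (P : state n m) (c : cut n m) : bool :=
  let f := first_cell c in
  let l := last_cell c in
  [&& P f.1 f.2, P l.1 l.2 &
      [forall i, forall j, (in_cut c i j && P i j) ==> (B i j == B f.1 f.2)]].

Definition apply_cut n m (P : state n m) (c : cut n m) : state n m :=
  fun i j => P i j && ~~ in_cut c i j.

Fixpoint solves n m (B : 'M[nat]_(n, m)) (P : state n m) (s : seq (cut n m)) : bool :=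
  match s with
  | [::] => [forall i, forall j, ~~ P i j]
  | c :: s' => valid_cut B P c && solves B (apply_cut P c) s'
  end.

Definition initial_state n m (B : 'M[nat]_(n, m)) : state n m := fun i j => 0 < B i j.

Definition yes_instance n m (B : 'M[nat]_(n, m)) (k : nat) : Prop :=
  exists s : seq (cut n m), size s <= k /\ solves B (initial_state B) s.

Definition row_block n m (B : 'M[nat]_(n, m)) (a b : nat) : Prop :=
  a <= b < n /\
  forall (j : 'I_m) (i i' : 'I_n), a <= i <= b -> a <= i' <= b ->
    0 < B i j -> 0 < B i' j -> B i j = B i' j.

Definition buttons_in_col n m (B : 'M[nat]_(n, m)) (lo hi : nat) (j : 'I_m) : nat :=
  #|[set i : 'I_n | (lo <= i <= hi) && (0 < B i j)]|.

Definition bad_block n m (B : 'M[nat]_(n, m)) (k a b i0 : nat) : Prop :=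
  row_block B a b /\ a <= i0 <= b /\
  forall j : 'I_m,
    buttons_in_col B a b j = 0 \/
    (k <= #|[set i : 'I_n | (a <= i < i0) && (0 < B i j)]| /\
     k <= buttons_in_col B i0.+1 b j).

From HB Require Import structures.
From mathcomp Require Import all_boot all_algebra.
From mathcomp Require Import zify.
Set Implicit Arguments. Unset Strict Implicit. Unset Printing Implicit Defensive.

(* A solution with at most k cuts has at most 2k end rows (the row of a
   horizontal cut, the two extreme rows of a vertical one), so some window of
   G(k) consecutive rows contains none of them.  Each cut then meets each column
   either in all rows of the window or in none: the buttons of the window are
   removed by vertical cuts only, hence lie in at most k columns, and every
   interval of rows inside the window is a row block.
   It remains to find a bad block in a window of length G(t) whose rows are
   nonempty and whose buttons lie in t columns, with
   G(t+1) = 2k(G(t)+1) + 1.  Take i0 at distance k(G(t)+1) from the top.  Either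
   the whole window works with this i0, or some column has fewer than k buttons
   on one side of i0; those k separators cut that side into k segments of length
   G(t), one of them avoiding the column, and we recurse on it with t-1
   columns. *)

Lemma count_iota_free_segment (p : pred nat) K l a :
  count p (iota a (K * l.+1)) < K ->
  exists a', [/\ a <= a', a' + l < a + K * l.+1 & count p (iota a' l) = 0].
Proof.
elim: K a => [|K IHK] a //; rewrite mulSn iotaD count_cat.
have [p_free _ | p_hit] := posnP (count p (iota a l)).
  by exists a; split => //; lia.
have hit : 0 < count p (iota a l.+1).
  by rewrite -[l.+1]addn1 iotaD count_cat; lia.
move=> few_hits; have [|a' [? ? ?]] := IHK (a + l.+1); first lia.
by exists a'; split => //; lia.
Qed.

Lemma count_iota_eq0 (p : pred nat) a l x :
  count p (iota a l) = 0 -> a <= x < a + l -> ~~ p x.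
Proof.
move=> /eqP; rewrite eqn0Ngt -has_count => /hasPn/(_ x) p_free x_in.
by apply: p_free; rewrite mem_iota.
Qed.

Lemma filter_iota_range N lo hi : hi <= N ->
  [seq x <- iota 0 N | lo <= x < hi] = iota lo (hi - lo).
Proof.
move=> hiN; rewrite (eq_filter (a2 := predI (leq lo) (gtn hi))) //.
rewrite filter_predI (filter_iota_ltn 0 hiN).
have [lo_hi | hi_lo] := leqP lo hi; last first.
  rewrite (eq_in_filter (a2 := pred0)) ?filter_pred0 => [|x]; last first.
    by rewrite mem_iota /=; lia.
  by rewrite (_ : hi - lo = 0) //; lia.
rewrite -{1}(subnKC lo_hi) iotaD filter_cat.
rewrite (eq_in_filter (a2 := pred0)) ?filter_pred0 => [|x]; last by rewrite mem_iota /=; lia.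
by rewrite (eq_in_filter (a2 := predT)) ?filter_predT // => x; rewrite mem_iota /=; lia.
Qed.

Definition col_count (T : Type) (p : nat -> T -> bool) (j : T) (lo hi : nat) :=
  count (p^~ j) (iota lo (hi - lo)).

Definition balanced_at (T : finType) (p : nat -> T -> bool) (k a b i0 : nat) :=
  [forall j, (col_count p j a b == 0) ||
             (k <= col_count p j a i0) && (k <= col_count p j i0.+1 b)].

Fixpoint block_len (k t : nat) : nat :=
  if t is t'.+1 then (2 * k * (block_len k t').+1).+1 else 1.

Lemma col_count_free_segment (T : Type) (p : nat -> T -> bool) j k g a b :
  (col_count p j a (a + k * g.+1) < k) || (col_count p j (a + k * g.+1).+1 b < k) ->
  a + (2 * k * g.+1).+1 <= b ->
  exists a', [/\ a <= a', a' + g <= b & count (p^~ j) (iota a' g) = 0].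
Proof.
rewrite /col_count => /orP[|].
  rewrite addKn => /count_iota_free_segment[a' [? ? ?]] len.
  by exists a'; split => //; lia.
move=> few len.
have /count_iota_free_segment[a' [? ? ?]] :
    count (p^~ j) (iota (a + k * g.+1).+1 (k * g.+1)) < k.
  move: few; rewrite (_ : b - _ = k * g.+1 + (b - (a + k * g.+1).+1 - k * g.+1)); last lia.
  by rewrite iotaD count_cat; lia.
by exists a'; split => //; lia.
Qed.

Lemma exists_balanced_block (T : finType) (p : nat -> T -> bool) k t (A : {set T}) lo hi :
  #|A| <= t -> block_len k t <= hi - lo ->
  (forall x, lo <= x < hi -> exists j, p x j) ->
  (forall x j, lo <= x < hi -> p x j -> j \in A) ->
  exists a b i0, [/\ lo <= a <= i0, i0 < b <= hi & balanced_at p k a b i0].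
Proof.
elim: t A lo hi => [|t IHt] A lo hi card_A len rows cols.
  move: card_A; rewrite leqn0 => /eqP/cards0_eq A0.
  have lo_in : lo <= lo < hi by move: len => /=; lia.
  have [j pj] := rows lo lo_in.
  by have := cols lo j lo_in pj; rewrite A0 inE.
move: len => /= len; set g := block_len k t in IHt len.
have [bal | /forallPn[j]] := boolP (balanced_at p k lo hi (lo + k * g.+1)).
  by exists lo, hi, (lo + k * g.+1); split => //; lia.
rewrite negb_or negb_and -!ltnNge => /andP[j_hit j_few].
have jA : j \in A.
  move: j_hit; rewrite -lt0n -has_count => /hasP[x]; rewrite mem_iota => x_in.
  by apply: cols; lia.
have [|a' [lo_a' a'_hi j_free]] := col_count_free_segment j_few; first lia.
have card_Aj : #|A :\ j| <= t by move: card_A; rewrite (cardsD1 j) jA.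
have rows' x : a' <= x < a' + g -> exists j, p x j by move=> x_in; apply: rows; lia.
have cols' x j' : a' <= x < a' + g -> p x j' -> j' \in A :\ j.
  move=> x_in pxj'; have j'A : j' \in A by apply: (cols x) pxj'; lia.
  rewrite !inE j'A andbT.
  by apply: contraTneq pxj' => ->; apply: count_iota_eq0 j_free _.
have [a [b [i0 [? ? bal]]]] := IHt _ _ _ card_Aj (eq_leq (esym (addKn _ _))) rows' cols'.
by exists a, b, i0; split => //; lia.
Qed.

Definition sum_of_cut n m (c : cut n m) : 'I_n * 'I_m * 'I_m + 'I_m * 'I_n * 'I_n :=
  match c with HCut i j1 j2 => inl (i, j1, j2) | VCut j i1 i2 => inr (j, i1, i2) end.

Definition cut_of_sum n m (x : 'I_n * 'I_m * 'I_m + 'I_m * 'I_n * 'I_n) : cut n m :=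
  match x with inl (i, j1, j2) => HCut i j1 j2 | inr (j, i1, i2) => VCut j i1 i2 end.

Lemma sum_of_cutK n m : cancel (@sum_of_cut n m) (@cut_of_sum n m).
Proof. by case. Qed.

HB.instance Definition _ n m := Equality.copy (cut n m) (can_type (@sum_of_cutK n m)).

Lemma count_predU_le (T : Type) (a1 a2 : pred T) s :
  count (predU a1 a2) s <= count a1 s + count a2 s.
Proof. by rewrite -count_predUI leq_addr. Qed.

Section Cuts.
Variables n m : nat.
Implicit Types (c : cut n m) (s : seq (cut n m)) (B : 'M[nat]_(n, m)) (P : state n m).

Definition cut_col c : option 'I_m := if c is VCut j _ _ then Some j else None.

Definition end_row c (x : nat) : bool :=
  match c with
  | HCut i _ _ => x == i
  | VCut _ i1 i2 => (x == minn i1 i2) || (x == maxn i1 i2)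
  end.

Definition ends_outside c (lo hi : nat) := forall x, lo <= x < hi -> ~~ end_row c x.

Lemma count_end_row c xs : uniq xs -> count (end_row c) xs <= 2.
Proof.
move=> xs_uniq; case: c => [i j1 j2 | j i1 i2] /=.
  by rewrite (eq_count (a2 := pred1 (i : nat))) // count_uniq_mem //; case: (_ \in _).
rewrite (eq_count (a2 := predU (pred1 (minn i1 i2)) (pred1 (maxn i1 i2)))) //.
apply: leq_trans (count_predU_le _ _ _) _.
by rewrite !count_uniq_mem //; case: (_ \in _); case: (_ \in _).
Qed.

Lemma count_end_rows s N : count (fun x => has (end_row^~ x) s) (iota 0 N) <= 2 * size s.
Proof.
elim: s => [|c s IHs] /=; first by rewrite (eq_count (a2 := pred0)) ?count_pred0.
rewrite (eq_count (a2 := predU (end_row c) (fun x => has (end_row^~ x) s))) //.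
apply: leq_trans (count_predU_le _ _ _) _.
by rewrite mulnS leq_add // count_end_row // iota_uniq.
Qed.

Lemma exists_window_free_of_ends s l :
  exists lo, lo + l < (2 * size s).+1 * l.+1 /\ {in s, forall c, ends_outside c lo (lo + l)}.
Proof.
have few : count (fun x => has (end_row^~ x) s) (iota 0 ((2 * size s).+1 * l.+1))
            < (2 * size s).+1 by rewrite ltnS count_end_rows.
have [lo [_ lo_l free]] := count_iota_free_segment few.
exists lo; split => // c cs x x_in.
by have /hasPn := count_iota_eq0 free x_in; apply.
Qed.

Lemma in_cut_window c lo hi (i i' : 'I_n) j : ends_outside c lo hi ->
  lo <= i < hi -> lo <= i' < hi -> in_cut c i j = in_cut c i' j.
Proof.
case: c => [r j1 j2 | j0 r1 r2] /= ends i_in i'_in.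
  have /= /negbTE := ends i i_in; have /= /negbTE := ends i' i'_in.
  by rewrite !val_eqE => -> ->.
have /= := ends (minn r1 r2); have /= := ends (maxn r1 r2).
rewrite !eqxx orbT /= => max_out min_out.
by congr (_ && _); apply/idP/idP; lia.
Qed.

Lemma in_cut_window_col c lo hi (i : 'I_n) j : ends_outside c lo hi ->
  lo <= i < hi -> in_cut c i j -> cut_col c = Some j.
Proof.
case: c => [r j1 j2 | j0 r1 r2] /= ends i_in; last by case/andP => /eqP->.
by have /= /negbTE := ends i i_in; rewrite val_eqE => ->.
Qed.

Lemma solves_cover B s P i j :
  solves B P s -> P i j -> exists2 c, c \in s & in_cut c i j.
Proof.
elim: s P => [|c s IHs] P /=; first by move=> /forallP/(_ i)/forallP/(_ j)/negP.
case/andP=> _ sol Pij; case cij: (in_cut c i j); first by exists c; rewrite ?mem_head.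
have [|c' c's] := IHs _ sol; first by rewrite /apply_cut Pij cij.
by exists c'; rewrite // in_cons c's orbT.
Qed.

Lemma solves_same_color B (S : pred 'I_n) j s P :
  {in s, forall c, {in S &, forall i i', in_cut c i j = in_cut c i' j}} ->
  solves B P s -> {in S &, forall i i', P i j -> P i' j -> B i j = B i' j}.
Proof.
elim: s P => [|c s IHs] P uniform /=.
  by move=> /forallP none i i' _ _ Pij; have /forallP/(_ j) := none i; rewrite Pij.
case/andP=> valid sol i i' Si Si' Pij Pi'j.
have c_uniform := uniform c (mem_head c s) i i' Si Si'.
case cij: (in_cut c i j).
  case/and3P: valid => _ _ /forallP same.
  have /forallP/(_ j) := same i; rewrite cij Pij => /eqP->.
  by have /forallP/(_ j) := same i'; rewrite -c_uniform cij Pi'j => /eqP->.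
apply: (IHs (apply_cut P c)) => //; last by rewrite /apply_cut Pi'j -c_uniform cij.
- by move=> c' c's; apply: uniform; rewrite in_cons c's orbT.
- by rewrite /apply_cut Pij cij.
Qed.

End Cuts.

Section Board.
Variables (n m : nat) (B : 'M[nat]_(n, m)).

Definition has_button (x : nat) (j : 'I_m) : bool :=
  if insub x is Some i then 0 < B i j else false.

Lemma has_buttonE (i : 'I_n) j : has_button i j = (0 < B i j).
Proof. by rewrite /has_button valK. Qed.

Lemma card_buttons_between lo hi j : hi <= n ->
  #|[set i : 'I_n | (lo <= i < hi) && (0 < B i j)]| = col_count has_button j lo hi.
Proof.
move=> hi_n; rewrite /col_count -(filter_iota_range lo hi_n) count_filter.
rewrite cardsE cardE /enum_mem size_filter -enumT -val_enum_ord count_map.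
by apply: eq_count => i; rewrite /= has_buttonE andbC.
Qed.

Lemma balanced_bad_block k a b i0 : a <= i0 <= b -> b < n -> row_block B a b ->
  balanced_at has_button k a b.+1 i0 -> bad_block B k a b i0.
Proof.
move=> i0_in b_n blk /forallP bal; split=> //; split=> // j.
have between lo : #|[set i : 'I_n | (lo <= i <= b) && (0 < B i j)]| =
    col_count has_button j lo b.+1 := card_buttons_between lo j b_n.
rewrite /buttons_in_col !between card_buttons_between; last lia.
by case/orP: (bal j) => [/eqP-> | /andP[]]; [left | right].
Qed.

Section SolutionWindow.
Variables (s : seq (cut n m)) (lo hi : nat).
Hypothesis solB : solves B (initial_state B) s.
Hypothesis ends_out : {in s, forall c, ends_outside c lo hi}.

Lemma window_button_col x j :
  lo <= x < hi -> has_button x j -> j \in pmap (@cut_col n m) s.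
Proof.
move=> x_in; rewrite /has_button; case: insubP => // i _ val_i Bij.
have [c cs cij] := solves_cover solB Bij.
by rewrite mem_pmap -(in_cut_window_col (ends_out cs) _ cij) ?val_i // map_f.
Qed.

Lemma window_row_block a b : lo <= a <= b -> b < hi -> b < n -> row_block B a b.
Proof.
move=> a_b b_hi b_n; split=> [|j i i' i_in i'_in]; first lia.
apply: (solves_same_color (S := [pred i : 'I_n | lo <= i < hi]) _ solB); rewrite ?inE; try lia.
by move=> c cs i1 i2; rewrite !inE; apply: in_cut_window (ends_out cs).
Qed.

End SolutionWindow.
End Board.

Lemma block_len_bound k t : (block_len k t).+1 <= 2 * (2 * k + 2) ^ t.
Proof.
elim: t => [|t IHt] //=; rewrite expnS.
have : 0 < (2 * k + 2) ^ t by rewrite expn_gt0 addn2.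
by move: IHt; move: ((2 * k + 2) ^ t) => X; nia.
Qed.

Lemma block_len_fits k n : (4 * k ^ 2 + 1) * (k + 1) * k * (4 * k + 6) ^ k < n ->
  (2 * k).+1 * (block_len k k).+1 <= n.+1.
Proof.
have [-> /= | k_gt0 big_n] := posnP k; first lia.
apply/leqW/ltnW/(leq_trans _ big_n); rewrite ltnS.
apply: (@leq_trans ((2 * k).+1 * (2 * (2 * k + 2) ^ k))).
  by rewrite leq_mul2l block_len_bound orbT.
rewrite mulnA; apply: leq_mul; first by rewrite expnS expn1; nia.
by rewrite leq_exp2r //; lia.
Qed.

Unset Implicit Arguments.

Theorem mainTheorem4 (n m : nat) (B : 'M[nat]_(n, m)) (k : nat) :
  (forall i : 'I_n, exists j : 'I_m, 0 < B i j) ->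
  ~ (exists a b i0 : nat, bad_block B k a b i0) ->
  (4 * k ^ 2 + 1) * (k + 1) * k * (4 * k + 6) ^ k < n ->
  ~ yes_instance B k.
Proof.
move=> rows_nonempty no_bad_block big_n [s [size_s solB]].
set g := block_len k k.
have [lo [lo_g ends_out]] := exists_window_free_of_ends s g.
have hi_n : lo + g <= n.
  have : (2 * size s).+1 * g.+1 <= (2 * k).+1 * g.+1 by rewrite leq_mul2r; lia.
  by have := block_len_fits big_n; lia.
pose A := [set j in pmap (@cut_col n m) s].
have card_A : #|A| <= k.
  rewrite cardsE; apply: leq_trans (card_size _) _.
  by rewrite size_pmap; apply: leq_trans (count_size _ _) size_s.
have rows x : lo <= x < lo + g -> exists j, has_button B x j.
  move=> x_in; have x_n : x < n by lia.
  have [j Bxj] := rows_nonempty (Ordinal x_n).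
  by exists j; rewrite (has_buttonE B (Ordinal x_n)).
have cols x j : lo <= x < lo + g -> has_button B x j -> j \in A.
  by move=> x_in /(window_button_col solB ends_out x_in); rewrite inE.
have [a [[|b] [i0 [a_i0 i0_b bal]]]] :=
  exists_balanced_block card_A (eq_leq (esym (addKn lo g))) rows cols; first lia.
apply: no_bad_block; exists a, b, i0.
by apply: balanced_bad_block bal; [lia | lia | apply: (window_row_block solB ends_out); lia].
Qed.
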